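(* Let $\mathcal C$ be a small strict 2-category. The assignment ${\rm i}\colon \operatorname{Tr}(\mathcal C)\to\operatorname{Tr}_{hor}(\mathcal C)$ given on objects by ${\rm i}(x)=(1_x\colon x\to x)$ and on morphisms by ${\rm i}([\sigma])=[f,\sigma]$ for a 2-endomorphism $\sigma\colon f\Rightarrow f$ of a 1-morphism $f\colon x\to y$ (viewing $\sigma$ as a 2-morphism $f\circ 1_x\Rightarrow 1_y\circ f$) is a well-defined functor which is full and faithful.
   Context: For a small category $\mathcal A$, $\operatorname{Tr}(\mathcal A)$ is the set of endomorphisms of $\mathcal A$ modulo the equivalence relation generated by $fg\sim gf$ for $f\colon x\to y$, $g\colon y\to x$. For a strict 2-category $\mathcal C$, the category $\operatorname{Tr}(\mathcal C)$ has the same objects as $\mathcal C$, hom-sets $\operatorname{Tr}(\mathcal C)(x,y)=\operatorname{Tr}(\mathcal C(x,y))$ (trace of the hom-category), composition $[\tau]\circ[\sigma]=[\tau\circ\sigma]$ (horizontal composition) and identities $[1_{1_x}]$. The horizontal trace $\operatorname{Tr}_{hor}(\mathcal C)$ is the category whose objects are 1-endomorphisms $f\colon x\to x$, $x\in\operatorname{Ob}(\mathcal C)$; a morphism from $f\colon x\to x$ to $g\colon y\to y$ is an equivalence class $[p,\sigma]$ of pairs consisting of a 1-morphism $p\colon x\to y$ and a 2-morphism $\sigma\colon p\circ f\Rightarrow g\circ p$, where the equivalence relation is generated by $(p,(g\circ\tau)\sigma)\sim(p',\sigma(\tau\circ f))$ for all $p,p'\colon x\to y$, $\sigma\colon p\circ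 f\Rightarrow g\circ p'$, $\tau\colon p'\Rightarrow p$. Composition is $[q,\tau][p,\sigma]=[qp,(\tau\circ p)(q\circ\sigma)]$ and identities are $[1_x,1_f]$. *)

From Stdlib Require Import Relations.

Definition cast2 {A : Type} (P : A -> A -> Type) {a a' b b' : A}
  (e1 : a = a') (e2 : b = b') (u : P a b) : P a' b' :=
  match e1 in _ = a0 return P a0 b' with
  | eq_refl => match e2 in _ = b0 return P a b0 with eq_refl => u end
  end.

(* A (small) strict 2-category.  comp1 g f is  g o f  ; vcomp b a is the
   vertical composite  b a  (first a, then b); hcomp b a is the horizontal
   composite  b o a . *)
Record Strict2Cat : Type := {
  Ob : Type;
  H1 : Ob -> Ob -> Type;
  H2 : forall x y : Ob, H1 x y -> H1 x y -> Type;
  id1 : forall x : Ob, H1 x x;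
  comp1 : forall x y z : Ob, H1 y z -> H1 x y -> H1 x z;
  id2 : forall (x y : Ob) (f : H1 x y), H2 x y f f;
  vcomp : forall (x y : Ob) (f g h : H1 x y),
      H2 x y g h -> H2 x y f g -> H2 x y f h;
  hcomp : forall (x y z : Ob) (f f' : H1 x y) (g g' : H1 y z),
      H2 y z g g' -> H2 x y f f' -> H2 x z (comp1 x y z g f) (comp1 x y z g' f');
  comp1_assoc : forall (w x y z : Ob) (h : H1 y z) (g : H1 x y) (f : H1 w x),
      comp1 w x z (comp1 x y z h g) f = comp1 w y z h (comp1 w x y g f);
  comp1_id_l : forall (x y : Ob) (f : H1 x y), comp1 x y y (id1 y) f = f;
  comp1_id_r : forall (x y : Ob) (f : H1 x y), comp1 x x y f (id1 x) = f;
  vcomp_assoc : forall (x y : Ob) (f g h k : H1 x y)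
      (c : H2 x y h k) (b : H2 x y g h) (a : H2 x y f g),
      vcomp x y f h k c (vcomp x y f g h b a) = vcomp x y f g k (vcomp x y g h k c b) a;
  vcomp_id_l : forall (x y : Ob) (f g : H1 x y) (a : H2 x y f g),
      vcomp x y f g g (id2 x y g) a = a;
  vcomp_id_r : forall (x y : Ob) (f g : H1 x y) (a : H2 x y f g),
      vcomp x y f f g a (id2 x y f) = a;
  hcomp_id2 : forall (x y z : Ob) (f : H1 x y) (g : H1 y z),
      hcomp x y z f f g g (id2 y z g) (id2 x y f) = id2 x z (comp1 x y z g f);
  interchange : forall (x y z : Ob) (f f' f'' : H1 x y) (g g' g'' : H1 y z)
      (b' : H2 y z g' g'') (b : H2 y z g g') (a' : H2 x y f' f'') (a : H2 x y f f'),
      hcomp x y z f f'' g g'' (vcomp y z g g' g'' b' b) (vcomp x y f f' f'' a' a)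
      = vcomp x z _ _ _ (hcomp x y z f' f'' g' g'' b' a') (hcomp x y z f f' g g' b a);
  hcomp_assoc : forall (w x y z : Ob) (f f' : H1 w x) (g g' : H1 x y) (h h' : H1 y z)
      (c : H2 y z h h') (b : H2 x y g g') (a : H2 w x f f'),
      cast2 (H2 w z) (comp1_assoc w x y z h g f) (comp1_assoc w x y z h' g' f')
        (hcomp w x z f f' _ _ (hcomp x y z g g' h h' c b) a)
      = hcomp w y z _ _ h h' c (hcomp w x y f f' g g' b a);
  hcomp_id_l : forall (x y : Ob) (f f' : H1 x y) (a : H2 x y f f'),
      cast2 (H2 x y) (comp1_id_l x y f) (comp1_id_l x y f')
        (hcomp x y y f f' (id1 y) (id1 y) (id2 y y (id1 y)) a) = a;
  hcomp_id_r : forall (x y : Ob) (f f' : H1 x y) (a : H2 x y f f'),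
      cast2 (H2 x y) (comp1_id_r x y f) (comp1_id_r x y f')
        (hcomp x x y (id1 x) (id1 x) f f' a (id2 x x (id1 x))) = a
}.

Arguments H1 {s} x y.
Arguments H2 {s x y} f g.
Arguments id1 {s} x.
Arguments comp1 {s x y z} g f.
Arguments id2 {s x y} f.
Arguments vcomp {s x y f g h} b a.
Arguments hcomp {s x y z f f' g g'} b a.
Arguments comp1_assoc {s w x y z} h g f.
Arguments comp1_id_l {s x y} f.
Arguments comp1_id_r {s x y} f.

Section Traces.
Variable C : Strict2Cat.

Definition TrEl (x y : Ob C) : Type := { f : H1 x y & H2 f f }.

Inductive tr_step (x y : Ob C) : TrEl x y -> TrEl x y -> Prop :=
| tr_step_intro : forall (f g : H1 x y) (a : H2 f g) (b : H2 g f),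
    tr_step x y (existT (fun k => H2 k k) f (vcomp b a)) (existT (fun k => H2 k k) g (vcomp a b)).

Definition tr_eq (x y : Ob C) : relation (TrEl x y) :=
  clos_refl_sym_trans _ (tr_step x y).

Definition tr_comp {x y z : Ob C} (t : TrEl y z) (s : TrEl x y) : TrEl x z :=
  existT (fun k => H2 k k) (comp1 (projT1 t) (projT1 s)) (hcomp (projT2 t) (projT2 s)).

Definition tr_id (x : Ob C) : TrEl x x := existT (fun k => H2 k k) (id1 x) (id2 (id1 x)).

(* objects: pairs (x, f : x -> x); morphisms (x,f) -> (y,g): pairs (p, sigma)
   with p : x -> y and sigma : p o f => g o p *)
Definition HorHom (x y : Ob C) (f : H1 x x) (g : H1 y y) : Type :=
  { p : H1 x y & H2 (comp1 p f) (comp1 g p) }.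

Inductive hor_step (x y : Ob C) (f : H1 x x) (g : H1 y y) :
    HorHom x y f g -> HorHom x y f g -> Prop :=
| hor_step_intro : forall (p p' : H1 x y) (sigma : H2 (comp1 p f) (comp1 g p'))
      (tau : H2 p' p),
    hor_step x y f g
      (existT (fun k => H2 (comp1 k f) (comp1 g k)) p (vcomp (hcomp (id2 g) tau) sigma))
      (existT (fun k => H2 (comp1 k f) (comp1 g k)) p' (vcomp sigma (hcomp tau (id2 f)))).

Definition hor_eq (x y : Ob C) (f : H1 x x) (g : H1 y y) :
    relation (HorHom x y f g) :=
  clos_refl_sym_trans _ (hor_step x y f g).

Definition hor_comp {x y z : Ob C} {f : H1 x x} {g : H1 y y} {h : H1 z z}
    (m2 : HorHom y z g h) (m1 : HorHom x y f g) : HorHom x z f h :=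
  let q := projT1 m2 in let tau := projT2 m2 in
  let p := projT1 m1 in let sigma := projT2 m1 in
  existT (fun k => H2 (comp1 k f) (comp1 h k)) (comp1 q p)
    (vcomp
       (cast2 H2 (comp1_assoc q g p) (comp1_assoc h q p) (hcomp tau (id2 p)))
       (cast2 H2 (eq_sym (comp1_assoc q p f)) eq_refl (hcomp (id2 q) sigma))).

Definition hor_id (x : Ob C) (f : H1 x x) : HorHom x x f f :=
  existT (fun k => H2 (comp1 k f) (comp1 f k)) (id1 x)
    (cast2 H2 (eq_sym (comp1_id_l f)) (eq_sym (comp1_id_r f)) (id2 f)).

(* on objects x |-> (x, 1_x) (encoded in the type);
   on morphisms [sigma] |-> [f, sigma], sigma viewed as f o 1_x => 1_y o f *)
Definition i_mor {x y : Ob C} (s : TrEl x y) : HorHom x y (id1 x) (id1 y) :=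
  existT (fun k => H2 (comp1 k (id1 x)) (comp1 (id1 y) k)) (projT1 s)
    (cast2 H2 (eq_sym (comp1_id_r (projT1 s))) (eq_sym (comp1_id_l (projT1 s)))
       (projT2 s)).

End Traces.

Arguments tr_eq {C x y}.
Arguments tr_comp {C x y z}.
Arguments tr_id {C}.
Arguments hor_eq {C x y f g}.
Arguments hor_comp {C x y z f g h}.
Arguments hor_id {C}.
Arguments i_mor {C x y}.

(* Between the objects 1_x and 1_y of Tr_hor(C), a representative [p, sigma]
   is, up to the strict unit laws, the same thing as an endomorphism sigma of
   p in C(x,y); so i is a bijection on representatives.  Whiskering by
   identity 1-cells is trivial in a strict 2-category, hence the generating
   relation (p, (1 o tau) sigma) ~ (p', sigma (tau o 1)) of Tr_hor(C) is
   carried exactly onto the relation tau sigma ~ sigma tau defining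
   Tr(C(x,y)), in both directions: i is well defined and faithful, and full
   by surjectivity.  Compatibility with composition is the interchange law
   (tau o 1)(1 o sigma) = tau o sigma. *)
From Stdlib Require Import Relations ProofIrrelevance.

Lemma clos_rst_map {A B : Type} (R : relation A) (S : relation B) (F : A -> B) :
  (forall a a', R a a' -> clos_refl_sym_trans B S (F a) (F a')) ->
  forall a a', clos_refl_sym_trans A R a a' -> clos_refl_sym_trans B S (F a) (F a').
Proof.
  intros HRS a a' Haa'.
  induction Haa' as [a a' Hstep | a | a a' _ IH | a a' a'' _ IH1 _ IH2].
  - exact (HRS a a' Hstep).
  - apply rst_refl.
  - apply rst_sym; exact IH.
  - eapply rst_trans; eassumption.
Qed.

Section Cast2.
Context {A : Type} (P : A -> A -> Type).

Lemma cast2_pi {a a' b b' : A} (e1 e1' : a = a') (e2 e2' : b = b') (u : P a b) :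
  cast2 P e1 e2 u = cast2 P e1' e2' u.
Proof. rewrite (proof_irrelevance _ e1 e1'), (proof_irrelevance _ e2 e2'). reflexivity. Qed.

Lemma cast2_id {a b : A} (e1 : a = a) (e2 : b = b) (u : P a b) : cast2 P e1 e2 u = u.
Proof. exact (cast2_pi e1 eq_refl e2 eq_refl u). Qed.

Lemma cast2_cast2 {a a' a'' b b' b'' : A}
  (e1 : a = a') (e1' : a' = a'') (e2 : b = b') (e2' : b' = b'') (u : P a b) :
  cast2 P e1' e2' (cast2 P e1 e2 u) = cast2 P (eq_trans e1 e1') (eq_trans e2 e2') u.
Proof. destruct e1', e2', e1, e2. reflexivity. Qed.

Lemma cast2_eq_sym {a a' b b' : A} (e1 : a = a') (e2 : b = b') (u : P a b) (v : P a' b') :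
  cast2 P e1 e2 u = v -> u = cast2 P (eq_sym e1) (eq_sym e2) v.
Proof. intros <-. destruct e1, e2. reflexivity. Qed.

End Cast2.

Section Strict2CatCasts.
Context {C : Strict2Cat}.

Lemma vcomp_cast2 {x y : Ob C} {f f' g g' h h' : H1 x y} (e1 : f = f')
  (e2 e2' : g = g') (e3 : h = h') (b : H2 g h) (a : H2 f g) :
  vcomp (cast2 H2 e2 e3 b) (cast2 H2 e1 e2' a) = cast2 H2 e1 e3 (vcomp b a).
Proof. rewrite (proof_irrelevance _ e2' e2). destruct e1, e2, e3. reflexivity. Qed.

Lemma hcomp_cast2l {x y z : Ob C} {f f' : H1 x y} {g g' k k' : H1 y z}
  (e1 : g = k) (e2 : g' = k') (b : H2 g g') (a : H2 f f') :
  hcomp (cast2 H2 e1 e2 b) a =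
  cast2 H2 (f_equal (fun u => comp1 u f) e1) (f_equal (fun u => comp1 u f') e2) (hcomp b a).
Proof. destruct e1, e2. reflexivity. Qed.

Lemma hcomp_cast2r {x y z : Ob C} {f f' k k' : H1 x y} {g g' : H1 y z}
  (e1 : f = k) (e2 : f' = k') (b : H2 g g') (a : H2 f f') :
  hcomp b (cast2 H2 e1 e2 a) =
  cast2 H2 (f_equal (fun u => comp1 g u) e1) (f_equal (fun u => comp1 g' u) e2) (hcomp b a).
Proof. destruct e1, e2. reflexivity. Qed.

Lemma hcomp_id_l_cast2 {x y : Ob C} {f f' : H1 x y} (a : H2 f f') :
  hcomp (id2 (id1 y)) a = cast2 H2 (eq_sym (comp1_id_l f)) (eq_sym (comp1_id_l f')) a.
Proof. apply cast2_eq_sym, hcomp_id_l. Qed.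

Lemma hcomp_id_r_cast2 {x y : Ob C} {f f' : H1 x y} (a : H2 f f') :
  hcomp a (id2 (id1 x)) = cast2 H2 (eq_sym (comp1_id_r f)) (eq_sym (comp1_id_r f')) a.
Proof. apply cast2_eq_sym, hcomp_id_r. Qed.

End Strict2CatCasts.

Section TraceToHorizontal.
Context {C : Strict2Cat}.

Definition tr_of_hor {x y : Ob C} (m : HorHom C x y (id1 x) (id1 y)) : TrEl C x y :=
  existT (fun k => H2 k k) (projT1 m)
    (cast2 H2 (comp1_id_r (projT1 m)) (comp1_id_l (projT1 m)) (projT2 m)).

Lemma tr_of_horK {x y : Ob C} (s : TrEl C x y) : tr_of_hor (i_mor s) = s.
Proof.
  destruct s as [p a]; unfold tr_of_hor, i_mor; simpl.
  rewrite cast2_cast2, cast2_id; reflexivity.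
Qed.

Lemma i_morK {x y : Ob C} (m : HorHom C x y (id1 x) (id1 y)) : i_mor (tr_of_hor m) = m.
Proof.
  destruct m as [p a]; unfold tr_of_hor, i_mor; simpl.
  rewrite cast2_cast2, cast2_id; reflexivity.
Qed.

Lemma i_mor_step {x y : Ob C} (s s' : TrEl C x y) :
  tr_step C x y s s' -> hor_eq (i_mor s) (i_mor s').
Proof.
  intros [f g a b]; apply rst_step.
  pose (sigma := cast2 H2 (eq_sym (comp1_id_r f)) (eq_sym (comp1_id_l g)) a).
  assert (Hba : i_mor (existT (fun k => H2 k k) f (vcomp b a)) =
    existT (fun k => H2 (comp1 k (id1 x)) (comp1 (id1 y) k)) f
      (vcomp (hcomp (id2 (id1 y)) b) sigma)).
  { unfold i_mor, sigma; simpl. rewrite hcomp_id_l_cast2, vcomp_cast2. reflexivity. }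
  assert (Hab : i_mor (existT (fun k => H2 k k) g (vcomp a b)) =
    existT (fun k => H2 (comp1 k (id1 x)) (comp1 (id1 y) k)) g
      (vcomp sigma (hcomp b (id2 (id1 x))))).
  { unfold i_mor, sigma; simpl. rewrite hcomp_id_r_cast2, vcomp_cast2. reflexivity. }
  rewrite Hba, Hab; apply hor_step_intro.
Qed.

Lemma tr_of_hor_step {x y : Ob C} (m m' : HorHom C x y (id1 x) (id1 y)) :
  hor_step C x y (id1 x) (id1 y) m m' -> tr_eq (tr_of_hor m) (tr_of_hor m').
Proof.
  intros [p p' sigma tau].
  remember (cast2 H2 (comp1_id_r p) (comp1_id_l p') sigma) as a eqn:Ha.
  symmetry in Ha; apply cast2_eq_sym in Ha; subst sigma.
  unfold tr_of_hor; simpl.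
  rewrite hcomp_id_l_cast2, hcomp_id_r_cast2, !vcomp_cast2, !cast2_cast2, !cast2_id.
  apply rst_step, tr_step_intro.
Qed.

Lemma i_mor_id (x : Ob C) : i_mor (tr_id x) = hor_id x (id1 x).
Proof. unfold i_mor, hor_id, tr_id; simpl. f_equal; apply cast2_pi. Qed.

Lemma i_mor_comp {x y z : Ob C} (t : TrEl C y z) (s : TrEl C x y) :
  i_mor (tr_comp t s) = hor_comp (i_mor t) (i_mor s).
Proof.
  destruct t as [q t], s as [p s]; unfold i_mor, hor_comp, tr_comp; simpl.
  rewrite hcomp_cast2l, hcomp_cast2r, !cast2_cast2, vcomp_cast2.
  rewrite <- interchange, vcomp_id_l, vcomp_id_r.
  f_equal; apply cast2_pi.
Qed.

End TraceToHorizontal.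

Theorem mainTheorem2 (C : Strict2Cat) :
  (* well defined on equivalence classes *)
  (forall (x y : Ob C) (s s' : TrEl C x y),
      tr_eq s s' -> hor_eq (i_mor s) (i_mor s'))
  (* preserves identities *)
  /\ (forall x : Ob C, hor_eq (i_mor (tr_id x)) (hor_id x (id1 x)))
  (* preserves composition *)
  /\ (forall (x y z : Ob C) (t : TrEl C y z) (s : TrEl C x y),
      hor_eq (i_mor (tr_comp t s)) (hor_comp (i_mor t) (i_mor s)))
  (* full *)
  /\ (forall (x y : Ob C) (m : HorHom C x y (id1 x) (id1 y)),
      exists s : TrEl C x y, hor_eq (i_mor s) m)
  (* faithful *)
  /\ (forall (x y : Ob C) (s s' : TrEl C x y),
      hor_eq (i_mor s) (i_mor s') -> tr_eq s s').
Proof.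
  split; [| split; [| split; [| split]]].
  - intros x y; exact (clos_rst_map _ _ i_mor i_mor_step).
  - intros x; rewrite i_mor_id; apply rst_refl.
  - intros x y z t s; rewrite i_mor_comp; apply rst_refl.
  - intros x y m; exists (tr_of_hor m); rewrite i_morK; apply rst_refl.
  - intros x y s s' Hss'.
    rewrite <- (tr_of_horK s), <- (tr_of_horK s').
    exact (clos_rst_map _ _ tr_of_hor tr_of_hor_step _ _ Hss').
Qed.
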